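(* The set $\mathtt{SUR}$ of surjective cellular automata is closed in $(\mathtt{CA},\delta)$: for every non-surjective $c\in\mathtt{CA}$ there is $\epsilon>0$ such that $\delta(c,d)\ge\epsilon$ for all $d\in\mathtt{SUR}$.
   Context: $\Sigma$ is a finite alphabet with $|\Sigma|\ge2$, $N(r)=[-r,r]$. A cellular automaton (CA) is a map $c:\Sigma^\mathbb{Z}\to\Sigma^\mathbb{Z}$ of the form $c(x)_i=F(x_{[i-r,i+r]})$ for a local function $F:\Sigma^{N(r)}\to\Sigma$. $\mathtt{CA}$ is the set of all CA, $\mathtt{SUR}$ the surjective ones. For $c,d\in\mathtt{CA}$ with common radius $r$, $D^c_d$ is the set of $w\in\Sigma^{N(r)}$ on which the local rules of $c$ and $d$ give different outputs, and $\delta(c,d)=|D^c_d|/|\Sigma|^{2r+1}$ (independent of $r$). *)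

From HB Require Import structures.
From mathcomp Require Import all_boot all_order all_algebra.
Unset Printing Implicit Defensive.
Import Order.TTheory GRing.Theory Num.Theory.

Definition config (S : finType) := int -> S.

Definition window (S : finType) (x : config S) (r : nat) (i : int)
  : {ffun 'I_(2 * r + 1) -> S} :=
  [ffun k : 'I_(2 * r + 1) => x (i - (r%:Z) + (nat_of_ord k)%:Z)%R].

Definition local_rule_of (S : finType) (c : config S -> config S) (r : nat)
  (F : {ffun 'I_(2 * r + 1) -> S} -> S) : Prop :=
  forall (x : config S) (i : int), c x i = F (window S x r i).

Definition is_CA (S : finType) (c : config S -> config S) : Prop :=
  exists (r : nat) (F : {ffun 'I_(2 * r + 1) -> S} -> S), local_rule_of S c r F.

Definition is_surjective (S : finType) (c : config S -> config S) : Prop :=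
  forall y : config S, exists x : config S, c x = y.

Definition disagreement (S : finType) (r : nat)
  (F G : {ffun 'I_(2 * r + 1) -> S} -> S) : {set {ffun 'I_(2 * r + 1) -> S}} :=
  [set w | F w != G w].

Definition delta_r (S : finType) (r : nat)
  (F G : {ffun 'I_(2 * r + 1) -> S} -> S) : rat :=
  ((#|disagreement S r F G|)%:R / (#|S| ^ (2 * r + 1))%:R)%R.

From HB Require Import structures.
From mathcomp Require Import all_boot all_order all_algebra.
From mathcomp Require Import zify.
From Stdlib Require Import Classical ClassicalEpsilon FunctionalExtensionality.
Import Order.TTheory GRing.Theory Num.Theory.
Set Implicit Arguments. Unset Strict Implicit.

(* Let c be a non-surjective CA.  By compactness of S^Z (a König-style
   argument on the finitely many central patterns of each radius), c has an
   orphan: a word u of length n+1 occurring in no image c x.  Now let d be a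
   surjective CA, and F, G local rules of radius r for c and d.  By the
   balance property of surjective CA, u has at least |S|^(2r) preimages of
   length n+1+2r under G; this is proved by a tensor-power argument
   (interleave k copies of u with free fillers of length 2r and let k grow).
   Since u is an orphan of c, each such preimage contains a window on which F
   and G disagree; recording the position of that window, the window itself
   and the remaining n letters injects the preimages into
   'I_(n+1) * D * S^n, where D is the disagreement set of F and G.  Hence
   |S|^(2r) <= (n+1) |D| |S|^n, i.e. delta(c, d) >= 1 / ((n+1) |S|^(n+1)),
   a bound depending on c only. *)

(* Letter number [i] of the finite word [w], or the default [a] when [i] is out
   of range; this lets us address words by natural-number positions. *)
Definition letter (T : Type) (a : T) (L : nat) (w : {ffun 'I_L -> T}) (i : nat) : T :=
  if insub i is Some o then w o else a.

Lemma letter_ord T a L (w : {ffun 'I_L -> T}) (o : 'I_L) : letter a w o = w o.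
Proof. by rewrite /letter valK. Qed.

Lemma letter_ffun T a L (f : nat -> T) i : (i < L)%N ->
  letter a [ffun o : 'I_L => f (nat_of_ord o)] i = f i.
Proof. by move=> lt_iL; rewrite /letter insubT /= ffunE. Qed.

Lemma word_ext (T : Type) (a : T) L (w1 w2 : {ffun 'I_L -> T}) :
  (forall i, (i < L)%N -> letter a w1 i = letter a w2 i) -> w1 = w2.
Proof. by move=> eq_w; apply/ffunP => o; rewrite -!(letter_ord a) eq_w. Qed.

Lemma finite_uniform_bound (T : finType) (P : T -> nat -> Prop) :
  (forall t n n', (n <= n')%N -> P t n -> P t n') ->
  (forall t, exists n, P t n) -> exists N, forall t, P t N.
Proof.
move=> mono ev.
suff [N HN]: exists N, forall t, t \in enum T -> P t N.
  by exists N => t; apply: HN; rewrite mem_enum.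
elim: (enum T) => [|t s [N HN]]; first by exists 0%N.
have [n Hn] := ev t; exists (maxn n N) => t'; rewrite inE => /orP [/eqP ->|Ht'].
  by apply: mono Hn; apply: leq_maxl.
by apply: mono (HN _ Ht'); apply: leq_maxr.
Qed.

Section Locality.
Variables (S : finType) (c : config S -> config S) (r : nat).
Variable F : {ffun 'I_(2 * r + 1) -> S} -> S.
Hypothesis hF : local_rule_of S c r F.

Lemma ca_shift (x : config S) (a j : int) :
  c (fun z => x (z + a)%R) j = c x (j + a)%R.
Proof. by rewrite !hF; congr F; apply/ffunP => k; rewrite !ffunE; congr x; lia. Qed.

Lemma ca_local (x x' : config S) (j : int) :
  (forall k : int, (absz (k - j)%R <= r)%N -> x k = x' k) -> c x j = c x' j.
Proof.
move=> agree_x; rewrite !hF; congr F; apply/ffunP => k; rewrite !ffunE.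
by apply: agree_x; have := ltn_ord k; lia.
Qed.

End Locality.

Section Compactness.
Variables (S : finType) (s0 : S) (c : config S -> config S) (r : nat).
Variable F : {ffun 'I_(2 * r + 1) -> S} -> S.
Hypothesis hF : local_rule_of S c r F.
Variable y : config S.

Definition hits (n : nat) (x : config S) : Prop :=
  forall j : int, (absz j <= n)%N -> c x j = y j.

Definition agree (m : nat) (z x : config S) : Prop :=
  forall j : int, (absz j <= m)%N -> z j = x j.

(* König step: if configurations in [A] hit [y] on arbitrarily large windows,
   then one central pattern of radius [m] is shared by such configurations
   hitting arbitrarily large windows (there are finitely many patterns). *)
Lemma compact_step (A : config S -> Prop) (m : nat) :
  (forall n, exists x, A x /\ hits n x) ->
  exists z, forall n, exists x, [/\ A x, agree m z x & hits n x].
Proof.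
move=> hitsA; apply: NNPP => no_z.
(* Otherwise each pattern [p] is ruled out from some radius on, hence all of
   them from a common radius [N], which contradicts [hitsA N]. *)
pose cfg (p : {ffun 'I_(2 * m).+1 -> S}) : config S :=
  fun j => letter s0 p (absz (j + m%:Z)%R).
pose Bad p n := forall x, A x -> agree m (cfg p) x -> ~ hits n x.
have [N HN] : exists N, forall p, Bad p N.
  apply: finite_uniform_bound.
    by move=> p n n' le_nn' bad x Ax ag hx; apply: (bad x Ax ag) => j Hj; apply: hx; lia.
  move=> p; apply: NNPP => good_p; apply: no_z; exists (cfg p) => n.
  apply: NNPP => no_x; apply: good_p; exists n => x Ax ag hx; apply: no_x; by exists x.
have [x [Ax hx]] := hitsA N.
pose p := [ffun k : 'I_(2 * m).+1 => x ((nat_of_ord k)%:Z - m%:Z)%R].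
apply: (HN p x Ax _ hx) => j Hj; rewrite /cfg /p.
have Hl : (absz (j + m%:Z)%R < (2 * m).+1)%N by lia.
by rewrite (letter_ffun _ (fun k => x ((k%:Z) - m%:Z)%R) Hl); congr x; lia.
Qed.

Definition extendable (m : nat) (z : config S) : Prop :=
  forall n, exists x, agree m z x /\ hits n x.

Lemma extendable_agree m z z' : agree m z z' -> extendable m z -> extendable m z'.
Proof.
move=> zz' ext_z n; have [x [zx hx]] := ext_z n.
by exists x; split=> // j Hj; rewrite -(zz' j Hj) zx.
Qed.

Lemma extendable_refine m z :
  extendable m z -> exists z', extendable m.+1 z' /\ agree m z z'.
Proof.
move=> ext_z.
have [z' Hz'] := @compact_step (agree m z) m.+1 ext_z.
exists z'; split; first by move=> n; have [x [_ ? ?]] := Hz' n; exists x.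
have [x [zx z'x _]] := Hz' 0%N.
by move=> j Hj; rewrite (zx j Hj) (z'x j) //; lia.
Qed.

(* Dependent choice along [extendable_refine]: a single configuration is
   extendable at every radius. *)
Lemma extendable_limit z0 :
  extendable 0 z0 -> exists x, forall m, extendable m x.
Proof.
move=> ext0.
have step m z : exists z', extendable m z -> extendable m.+1 z' /\ agree m z z'.
  case: (classic (extendable m z)) => [/extendable_refine [z' ?]|]; last by exists z.
  by exists z'.
pose next m z := proj1_sig (constructive_indefinite_description _ (step m z)).
have nextP m z : extendable m z -> extendable m.+1 (next m z) /\ agree m z (next m z).
  by rewrite /next; case: constructive_indefinite_description.
pose zs := fix zs (m : nat) : config S := if m is m'.+1 then next m' (zs m') else z0.
have ext_zs m : extendable m (zs m) by elim: m => [|m IH] //=; case: (nextP m _ IH).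
have agree_zs m m' : (m <= m')%N -> agree m (zs m) (zs m').
  elim: m' => [|m' IH]; first by rewrite leqn0 => /eqP ->.
  rewrite leq_eqVlt => /orP [/eqP -> //|]; rewrite ltnS => le_mm' j Hj.
  by rewrite (IH le_mm' j Hj) /=; case: (nextP m' _ (ext_zs m')) => _; apply; lia.
exists (fun j => zs (absz j) j) => m; apply: extendable_agree (ext_zs m).
by move=> j Hj; symmetry; apply: agree_zs.
Qed.

(* Compactness of S^Z: a target hit by [c] on arbitrarily large windows is in
   the image of [c]. *)
Lemma image_of_hits : (forall n, exists x, hits n x) -> exists x, c x = y.
Proof.
move=> hits_all.
have [z0 ext0] : exists z, extendable 0 z.
  have [z Hz] := @compact_step (fun _ => True) 0 (fun n =>
    let: ex_intro x h := hits_all n in ex_intro _ x (conj I h)).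
  by exists z => n; have [x [_ ? ?]] := Hz n; exists x.
have [x ext_x] := extendable_limit ext0.
exists x; apply: functional_extensionality => j.
have [x' [xx' hx']] := ext_x (absz j + r)%N (absz j).
by rewrite -(hx' j (leqnn _)); apply: (ca_local hF) => k Hk; apply: xx'; lia.
Qed.

End Compactness.

Lemma orphan_word (S : finType) (s0 : S) (c : config S -> config S) :
  is_CA S c -> ~ is_surjective S c ->
  exists n (u : {ffun 'I_n.+1 -> S}),
    forall x, exists k : 'I_n.+1, c x ((nat_of_ord k)%:Z)%R <> u k.
Proof.
move=> [r [F hF]] not_surj; apply: NNPP => no_orphan; apply: not_surj => y.
apply: (image_of_hits s0 hF) => n.
pose u := [ffun k : 'I_(2 * n).+1 => y ((nat_of_ord k)%:Z - n%:Z)%R].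
have [x hx] : exists x, forall k : 'I_(2 * n).+1, c x ((nat_of_ord k)%:Z)%R = u k.
  apply: NNPP => no_x; apply: no_orphan; exists (2 * n)%N, u => x.
  apply: NNPP => all_k; apply: no_x; exists x => k.
  by apply: NNPP => neq_k; apply: all_k; exists k.
exists (fun z => x (z + n%:Z)%R) => j Hj; rewrite (ca_shift hF).
have Hl : (absz (j + n%:Z)%R < (2 * n).+1)%N by lia.
have E : ((j + n%:Z) = (absz (j + n%:Z)%R)%:Z)%R by lia.
by rewrite {1}E (hx (Ordinal Hl)) ffunE /= -E; congr y; lia.
Qed.

Lemma bernoulli_nat a k : (a ^ k.+1 + k.+1 * a ^ k <= (a + 1) ^ k.+1)%N.
Proof.
elim: k => [|k IH]; first by rewrite expn1 expn0; lia.
rewrite (expnS (a + 1)) (expnS a k.+1) (expnS a k).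
move: IH; rewrite (expnS a k); set P := a ^ k; set Q := (a + 1) ^ k.+1; nia.
Qed.

(* Tensor-power trick: a bound [Q ^ k <= N ^ k * Q] holding for every [k]
   forces [Q <= N], since otherwise [(Q / N) ^ k] would grow unboundedly. *)
Lemma le_of_power_bound Q N : (forall k, Q ^ k <= N ^ k * Q)%N -> (Q <= N)%N.
Proof.
move=> bound; rewrite leqNgt; apply/negP => lt_NQ.
have [N0|N_gt0] := posnP N; first by move: (bound 1%N); rewrite N0 !expn1; lia.
pose k := (N * Q).-1.
have k1E : k.+1 = (N * Q)%N by rewrite /k prednK // muln_gt0 N_gt0; lia.
have growth : ((N + 1) ^ k.+1 <= Q ^ k.+1)%N by rewrite leq_exp2r // addn1.
have := leq_trans (bernoulli_nat N k) (leq_trans growth (bound k.+1)).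
have : (0 < N ^ k)%N by rewrite expn_gt0 N_gt0.
rewrite !(expnS N k); move: k1E; set P := N ^ k; set R := (N + 1) ^ k.+1; nia.
Qed.

Section BlockWords.
Variables (S : finType) (s0 : S).

(* The word [v z_0 v z_1 ... v z_(k-1)]: [k] copies of [v] separated by the
   filler words [z_j]. *)
Definition interleave p q k (v : {ffun 'I_p -> S})
    (z : {ffun 'I_k -> {ffun 'I_q -> S}}) : {ffun 'I_(k * (p + q)) -> S} :=
  [ffun i : 'I_(k * (p + q)) =>
     if (i %% (p + q) < p)%N then letter s0 v (i %% (p + q))
     else letter s0 (letter [ffun=> s0] z (i %/ (p + q))) (i %% (p + q) - p)].

Lemma interleave_letter p q k v z j t : (j < k)%N -> (t < p + q)%N ->
  letter s0 (@interleave p q k v z) (j * (p + q) + t) =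
    if (t < p)%N then letter s0 v t else letter s0 (letter [ffun=> s0] z j) (t - p).
Proof.
move=> lt_jk lt_t; rewrite /interleave (letter_ffun _ (fun i =>
  if (i %% (p + q) < p)%N then letter s0 v (i %% (p + q))
  else letter s0 (letter [ffun=> s0] z (i %/ (p + q))) (i %% (p + q) - p))); last by nia.
have pq_gt0 : (0 < p + q)%N by apply: leq_ltn_trans lt_t.
by rewrite divnMDl // divn_small // addn0 modnMDl modn_small.
Qed.

Lemma interleave_inj p q k (v : {ffun 'I_p -> S}) : injective (@interleave p q k v).
Proof.
move=> z1 z2 eq_z; apply: (@word_ext _ [ffun=> s0]) => j lt_jk.
apply: (@word_ext _ s0) => t lt_tq.
have := f_equal (fun w => letter s0 w (j * (p + q) + (p + t))) eq_z => /=.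
by rewrite !interleave_letter ?ltn_add2l // ltnNge leq_addr /= addKn.
Qed.

Definition block s j L (w : {ffun 'I_L -> S}) : {ffun 'I_s -> S} :=
  [ffun t : 'I_s => letter s0 w (j * s + t)].
Arguments block s j {L} w.
Definition tail k s t (w : {ffun 'I_(k * s + t) -> S}) : {ffun 'I_t -> S} :=
  [ffun i : 'I_t => letter s0 w (k * s + i)].
Arguments tail k s {t} w.

Lemma blocks_tail_inj k s t :
  injective (fun w : {ffun 'I_(k * s + t) -> S} =>
               ([ffun j : 'I_k => block s j w], tail k s w)).
Proof.
move=> w1 w2 [eq_blocks eq_tail]; apply: (@word_ext _ s0) => i lt_i.
case: (ltnP i (k * s)) => lt_iks.
  have s_gt0 : (0 < s)%N by rewrite lt0n; apply: contraTneq lt_iks => ->; rewrite muln0.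
  have := f_equal (fun f => letter s0 (letter [ffun=> s0] f (i %/ s)) (i %% s)) eq_blocks.
  rewrite /= !(letter_ffun _ (fun j => block s j _)) ?ltn_divLR //.
  rewrite /block !(letter_ffun _ (fun t => letter s0 _ (i %/ s * s + t))) ?ltn_pmod //.
  by rewrite -divn_eq.
have lt_it : (i - k * s < t)%N by lia.
have := f_equal (fun f => letter s0 f (i - k * s)) eq_tail.
by rewrite /tail /= !(letter_ffun _ (fun j => letter s0 _ (k * s + j))) // subnKC.
Qed.

End BlockWords.
Arguments block {S} s0 s j {L} w.
Arguments tail {S} s0 k s {t} w.

Section RuleImage.
Variables (S : finType) (s0 : S) (r : nat).
Variable G : {ffun 'I_(2 * r + 1) -> S} -> S.

Definition subwindow L (w : {ffun 'I_L -> S}) (t : nat) : {ffun 'I_(2 * r + 1) -> S} :=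
  [ffun j : 'I_(2 * r + 1) => letter s0 w (t + j)].

Definition rule_image L (w : {ffun 'I_(L + 2 * r) -> S}) : {ffun 'I_L -> S} :=
  [ffun t : 'I_L => G (subwindow w t)].

Lemma rule_image_letter L (w : {ffun 'I_(L + 2 * r) -> S}) t : (t < L)%N ->
  letter s0 (rule_image w) t = G (subwindow w t).
Proof. by move=> lt_tL; rewrite /rule_image (letter_ffun _ (fun t => G (subwindow w t))). Qed.

Lemma rule_image_block p k (w : {ffun 'I_(k * (p + 2 * r) + 2 * r) -> S}) j t :
  (j < k)%N -> (t < p)%N ->
  letter s0 (rule_image (block s0 (p + 2 * r) j w)) t =
    letter s0 (rule_image w) (j * (p + 2 * r) + t).
Proof.
move=> lt_jk lt_tp; rewrite !rule_image_letter //; last by nia.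
congr G; apply/ffunP => i; rewrite !ffunE.
rewrite /block (letter_ffun _ (fun u => letter s0 w (j * (p + 2 * r) + u))).
  by rewrite addnA.
by have := ltn_ord i; lia.
Qed.

Variable d : config S -> config S.
Hypothesis hG : local_rule_of S d r G.
Hypothesis d_surj : is_surjective S d.

Lemma rule_image_surjective L (y : {ffun 'I_L -> S}) : exists w, rule_image w = y.
Proof.
have [x dx] := d_surj (fun z => letter s0 y (absz (z - r%:Z)%R)).
exists [ffun i : 'I_(L + 2 * r) => x ((nat_of_ord i)%:Z)%R].
apply: (@word_ext _ s0) => t lt_tL; rewrite rule_image_letter //.
have := f_equal (fun f => f ((t + r)%N%:Z)%R) dx; rewrite hG /=.
have -> : absz ((t + r)%N%:Z - r%:Z)%R = t by lia.
move=> <-; congr G; apply/ffunP => j; rewrite !ffunE.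
rewrite (letter_ffun _ (fun i => x (i%:Z)%R)); last by have := ltn_ord j; lia.
by congr x; lia.
Qed.

(* Interleaving [k] copies of [v] with arbitrary
   fillers and cutting a preimage of the result into blocks injects
   [(S^(2r))^k] into [Pre(v)^k * S^(2r)]; let [k] grow. *)
Lemma balance m (v : {ffun 'I_m.+1 -> S}) :
  (#|S| ^ (2 * r) <= #|[set w : {ffun 'I_(m.+1 + 2 * r) -> S} | rule_image w == v]|)%N.
Proof.
set s := (m.+1 + 2 * r)%N; set Pre := [set w | _].
apply: le_of_power_bound => k.
pose pre (y : {ffun 'I_(k * s) -> S}) : {ffun 'I_(k * s + 2 * r) -> S} :=
  odflt [ffun=> s0] [pick w | rule_image w == y].
have preE y : rule_image (pre y) = y.
  rewrite /pre; case: pickP => [w /eqP //|none].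
  by have [w wy] := rule_image_surjective y; move: (none w); rewrite wy eqxx.
pose code z := let w := pre (interleave s0 v z) in
  ([ffun j : 'I_k => block s0 s j w], tail s0 k s w).
have code_inj : injective code.
  move=> z1 z2 /blocks_tail_inj eq_pre; apply: (@interleave_inj _ s0 _ _ _ v).
  by rewrite -(preE (interleave s0 v z1)) eq_pre preE.
have code_blocks : [set code z | z in [set: {ffun 'I_k -> {ffun 'I_(2 * r) -> S}}]]
    \subset setX [set f | f \in ffun_on (mem Pre)] [set: {ffun 'I_(2 * r) -> S}].
  apply/subsetP => _ /imsetP [z _ ->]; rewrite !inE andbT.
  apply/ffun_onP => j; rewrite ffunE inE; apply/eqP.
  apply: (@word_ext _ s0) => t lt_tm.
  rewrite rule_image_block // preE interleave_letter ?lt_tm //.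
  by rewrite /s; lia.
have := subset_leq_card code_blocks.
rewrite card_imset // cardsX !cardsT !card_ffun !card_ord cardsE card_ffun_on card_ord.
by rewrite expnM mulnC.
Qed.

End RuleImage.

Section Disagreement.
Variables (S : finType) (s0 : S) (r n : nat).
Variables F G : {ffun 'I_(2 * r + 1) -> S} -> S.

Definition excise (k : nat) (w : {ffun 'I_(n.+1 + 2 * r) -> S}) : {ffun 'I_n -> S} :=
  [ffun i : 'I_n => letter s0 w (if (i < k)%N then nat_of_ord i else (i + (2 * r + 1))%N)].

Lemma excise_letter (k : nat) w i : (i < n)%N ->
  letter s0 (excise k w) i = letter s0 w (if (i < k)%N then i else (i + (2 * r + 1))%N).
Proof.
by move=> lt_in; rewrite (letter_ffun _ (fun i =>
  letter s0 w (if (i < k)%N then i else (i + (2 * r + 1))%N))).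
Qed.

Lemma window_excise_inj (k : 'I_n.+1) (w1 w2 : {ffun 'I_(n.+1 + 2 * r) -> S}) :
  subwindow s0 r w1 k = subwindow s0 r w2 k -> excise k w1 = excise k w2 -> w1 = w2.
Proof.
move=> eq_win eq_rest; have lt_kn := ltn_ord k.
apply: (@word_ext _ s0) => i lt_i.
have [lt_ik|le_ki] := ltnP i k.
  have := f_equal (fun f => letter s0 f i) eq_rest.
  by rewrite /= !excise_letter ?lt_ik //; lia.
have [lt_iwin|le_wini] := ltnP i (k + (2 * r + 1)).
  have lt_j : (i - k < 2 * r + 1)%N by lia.
  have := f_equal (fun f => letter s0 f (i - k)) eq_win.
  by rewrite /subwindow /= !(letter_ffun _ (fun j => letter s0 _ (k + j))) // subnKC.
have lt_j : (i - (2 * r + 1) < n)%N by lia.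
have := f_equal (fun f => letter s0 f (i - (2 * r + 1))) eq_rest.
rewrite /= !excise_letter // ifF; last by lia.
by rewrite subnK //; lia.
Qed.

(* Words of length [n + 1 + 2r] having some window in the disagreement set
   [D] of [F] and [G] are few: record the first such window, its position
   and the remaining [n] letters. *)
Lemma hitting_words_card (P : {set {ffun 'I_(n.+1 + 2 * r) -> S}}) :
  (forall w, w \in P -> exists k : 'I_n.+1, subwindow s0 r w k \in disagreement S r F G) ->
  (#|P| <= n.+1 * #|disagreement S r F G| * #|S| ^ n)%N.
Proof.
set D := disagreement S r F G => hits_D.
pose pos (w : {ffun 'I_(n.+1 + 2 * r) -> S}) : 'I_n.+1 := odflt ord0 [pick k : 'I_n.+1 | subwindow s0 r w k \in D].
pose code w := (pos w, subwindow s0 r w (pos w), excise (pos w) w).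
have code_inj : injective code.
  move=> w1 w2 [eq_pos eq_win eq_rest].
  by move: eq_win eq_rest; rewrite -eq_pos; apply: window_excise_inj.
have code_D : code @: P \subset setX (setX [set: 'I_n.+1] D) [set: {ffun 'I_n -> S}].
  apply/subsetP => _ /imsetP [w wP ->]; rewrite !in_setX !in_setT /= andbT /pos.
  case: pickP => [k -> //|none]; have [k] := hits_D w wP.
  by rewrite none.
have := subset_leq_card code_D.
by rewrite card_imset // !cardsX !cardsT card_ord card_ffun card_ord.
Qed.

End Disagreement.

(* If [u] is an orphan of [c] (with local rule [F] of radius [r]), then every
   preimage of [u] under a local rule [G] of radius [r] contains a window on
   which [F] and [G] disagree: otherwise [c] would map an extension of that
   preimage onto [u]. *)
Lemma orphan_preimage_disagrees (S : finType) (s0 : S) (c : config S -> config S)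
    (r n : nat) (F G : {ffun 'I_(2 * r + 1) -> S} -> S) (u : {ffun 'I_n.+1 -> S}) :
  local_rule_of S c r F ->
  (forall x, exists k : 'I_n.+1, c x ((nat_of_ord k)%:Z)%R <> u k) ->
  forall w, rule_image s0 G w = u ->
  exists k : 'I_n.+1, subwindow s0 r w k \in disagreement S r F G.
Proof.
move=> hF orphan_u w wu.
have [k ck] := orphan_u (fun z => letter s0 w (absz (z + r%:Z)%R)).
exists k; rewrite inE; apply/eqP => FG; apply: ck.
rewrite hF -(letter_ord s0 u) -wu rule_image_letter // -FG.
by congr F; apply/ffunP => j; rewrite !ffunE; congr letter; lia.
Qed.

Lemma density_lower_bound (R : numFieldType) (q n r D : nat) : (0 < q)%N ->
  (q ^ (2 * r) <= n.+1 * D * q ^ n)%N ->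
  ((n.+1 * q ^ n.+1)%N%:R^-1 <= D%:R / (q ^ (2 * r + 1))%:R :> R)%R.
Proof.
move=> q_gt0 count.
rewrite ler_pdivlMr; last by rewrite ltr0n expn_gt0 q_gt0.
rewrite mulrC ler_pdivrMr; last by rewrite ltr0n muln_gt0 expn_gt0 q_gt0.
rewrite -natrM ler_nat expnD expn1 expnS.
by move: count; set A := q ^ (2 * r); set B := q ^ n; nia.
Qed.

Theorem theorem4p2 (S : finType) (hS : 1 < #|S|)
  (c : config S -> config S) (hc : is_CA S c) (hns : ~ is_surjective S c) :
  exists eps : rat, (0 < eps)%R /\
    forall d : config S -> config S, is_CA S d -> is_surjective S d ->
      forall (r : nat) (F G : {ffun 'I_(2 * r + 1) -> S} -> S),
        local_rule_of S c r F -> local_rule_of S d r G ->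
        (eps <= delta_r S r F G)%R.
Proof.
have q_gt0 : (0 < #|S|)%N by lia.
have /card_gt0P [s0 _] := q_gt0.
have [n [u orphan_u]] := orphan_word s0 hc hns.
exists ((n.+1 * #|S| ^ n.+1)%N%:R^-1)%R; split.
  by rewrite invr_gt0 ltr0n muln_gt0 expn_gt0 q_gt0.
move=> d _ d_surj r F G hF hG; apply: density_lower_bound => //.
set P := [set w | rule_image s0 G w == u].
apply: leq_trans (balance s0 hG d_surj u) _; rewrite -/P.
apply: hitting_words_card => w; rewrite inE => /eqP.
exact: orphan_preimage_disagrees hF orphan_u w.
Qed.
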